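(* Let $\nu\in\mathbb{Z}_{\ge0}\cup\{\infty\}$ be a changepoint, $T$ a random sequence length and $\tau$ the detection time of an online changepoint detector; let $\Delta\tau:=\tau-\nu$ and $\Delta T:=T-\nu$. Assume (independent censoring) that conditionally on $\{\nu<\infty,\ \Delta\tau\ge0\}$, $\Delta\tau$ and $\Delta T$ are independent, and that $M_\infty:=\mathbb{E}[\Delta\tau\mid\Delta\tau\ge0,\ \nu<\infty]<\infty$. Let $S^{\mathrm{ADD}}(t):=P(\Delta\tau>t\mid\Delta\tau\ge0,\nu<\infty)$, let $\Delta T^*_{\max}:=\inf\{t\mid P(\Delta T\le t)=1\}$ (assumed finite), and set $$M^{(\mathrm{KM})}_T:=\int_0^{\Delta T^*_{\max}}S^{\mathrm{ADD}}(t)\,dt,\qquad M^{(\mathrm{LB})}_T:=\mathbb{E}[\Delta\tau\mid\nu<\infty,\ 0\le\Delta\tau\le\Delta T],$$ $\mathcal{B}_{\mathrm{TR}}(\hat M^{(\mathrm{KM})}_T):=M^{(\mathrm{KM})}_T-M_\infty$ and $\mathcal{B}_{\mathrm{TR}}(\hat M^{(\mathrm{LB})}_T):=M^{(\mathrm{LB})}_T-M_\infty$. Then $$\mathcal{B}_{\mathrm{TR}}(\hat M^{(\mathrm{LB})}_T)\le\mathcal{B}_{\mathrm{TR}}(\hat M^{(\mathrm{KM})}_T)\le0.$$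
   Context: Setting: a sequence has frames drawn from a pre-change density before the changepoint $\nu$ and a post-change density from $\nu$ on; $\nu$ and $T$ are independent of the observations. $M_\infty$ is the average detection delay (ADD). $M^{(\mathrm{KM})}_T$ is the population version of the KM-ADD estimator with upper limit $b=\Delta T^*_{\max}$, and $M^{(\mathrm{LB})}_T$ the population version of the conventional estimator averaging delays only over sequences whose detection occurs within the sequence. *)

From HB Require Import structures.
From mathcomp Require Import all_boot all_order all_algebra.
From mathcomp Require Import all_classical all_reals all_analysis.
From mathcomp Require Import measurable_realfun.
Set Implicit Arguments. Unset Strict Implicit. Unset Printing Implicit Defensive.
Import Order.TTheory GRing.Theory Num.Theory.
Import numFieldNormedType.Exports.
Local Open Scope classical_set_scope.
Local Open Scope ring_scope.
Local Open Scope ereal_scope.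

Section defs.
Context (d : measure_display) (Omega : measurableType d) (R : realType)
  (P : probability Omega R).

Definition condP (B A : set Omega) : \bar R := P (B `&` A) / P A.

Definition condE (X : Omega -> \bar R) (A : set Omega) : \bar R :=
  (\int[P]_(w in A) X w) / P A.

Definition cond_indep (X Y : Omega -> \bar R) (C : set Omega) : Prop :=
  forall U V : set (\bar R), measurable U -> measurable V ->
    condP (X @^-1` U `&` Y @^-1` V) C = condP (X @^-1` U) C * condP (Y @^-1` V) C.

Context (nu tau T : Omega -> \bar R).

Definition dtau (w : Omega) : \bar R := tau w - nu w.
Definition dT (w : Omega) : \bar R := T w - nu w.

Definition eventA : set Omega := [set w | nu w < +oo /\ 0 <= dtau w].
Definition eventLB : set Omega :=
  [set w | nu w < +oo /\ 0 <= dtau w /\ dtau w <= dT w].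

Definition Minf : \bar R := condE dtau eventA.

Definition S_ADD (t : R) : \bar R := condP [set w | t%:E < dtau w] eventA.

Definition DeltaTmax : \bar R :=
  ereal_inf (EFin @` [set t : R | P [set w | dT w <= t%:E] = 1]).

Definition M_KM : \bar R :=
  \int[lebesgue_measure]_(t in `[0%R, fine DeltaTmax]) S_ADD t.

Definition M_LB : \bar R := condE dtau eventLB.

Definition bias_KM : \bar R := M_KM - Minf.
Definition bias_LB : \bar R := M_LB - Minf.

End defs.

From HB Require Import structures.
From mathcomp Require Import all_boot all_order all_algebra.
From mathcomp Require Import all_classical all_reals all_analysis.
From mathcomp Require Import measurable_realfun.
From mathcomp Require Import ring lra.
Import Order.TTheory GRing.Theory Num.Theory.
Local Open Scope classical_set_scope.
Local Open Scope ring_scope.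
Local Open Scope ereal_scope.

(* By the layer-cake formula both estimands integrate a conditional survival
   function of the delay over [0, b[, where b = DeltaTmax: M_KM integrates
   S_ADD(t) = P(dtau > t | A), and, because dT <= b almost surely and
   dtau <= dT on the event L, M_LB integrates P(dtau > t | L).  Thus M_KM is
   the conditional mean of min(dtau, b) given A, which is at most M_inf.
   Independent censoring gives P(dtau > t | L) <= P(dtau > t | A) for every t:
   keeping only the detections that occur before the end of the sequence
   favours short delays.  Hence M_LB <= M_KM <= M_inf. *)

Section measure_facts.
Context {d : measure_display} {Omega : measurableType d} {R : realType}.

Lemma measurable_set_lte {f g : Omega -> \bar R} :
  measurable_fun setT f -> measurable_fun setT g -> measurable [set w | f w < g w].
Proof. by move=> mf mg; rewrite -[X in measurable X]setTI; exact: measurable_lte. Qed.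

Lemma measurable_set_lee {f g : Omega -> \bar R} :
  measurable_fun setT f -> measurable_fun setT g -> measurable [set w | f w <= g w].
Proof. by move=> mf mg; rewrite -[X in measurable X]setTI; exact: measurable_lee. Qed.

Variable P : probability Omega R.

Lemma probability_fineK {B : set Omega} : measurable B -> (fine (P B))%:E = P B.
Proof. by move=> mB; rewrite fineK// fin_num_measure. Qed.

Lemma div_probabilityE {B : set Omega} (x : \bar R) :
  measurable B -> 0 < P B -> x / P B = x * ((fine (P B))^-1)%:E.
Proof.
move=> mB PB0; rewrite -[in LHS]probability_fineK// inver gt_eqF//.
by rewrite -lte_fin probability_fineK.
Qed.

Lemma fine_probability_le {B C : set Omega} :
  measurable B -> measurable C -> B `<=` C -> (fine (P B) <= fine (P C))%R.
Proof.
by move=> mB mC BC; rewrite fine_le ?fin_num_measure ?le_measure ?inE.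
Qed.

Lemma fine_probabilityDI {B C : set Omega} : measurable B -> measurable C ->
  fine (P B) = (fine (P (B `\` C)) + fine (P (B `&` C)))%R.
Proof.
move=> mB mC; rewrite (measureDI P mB mC) fineD// fin_num_measure//.
  exact: measurableD.
exact: measurableI.
Qed.

End measure_facts.

Section tail_integral.
Context d (Omega : measurableType d) (R : realType) (P : probability Omega R).
Variables (S : set Omega) (X : Omega -> \bar R) (c : R).
Hypotheses (mS : measurable S) (mX : measurable_fun setT X) (c0 : (0 <= c)%R).
Hypothesis X0 : forall w, S w -> 0 <= X w.

Local Notation tail t := (P ([set w | t%:E < X w] `&` S)).

Let h w := fine (mine (X w) c%:E).

Let hE w : S w -> (h w)%:E = mine (X w) c%:E.
Proof.
move=> Sw; rewrite /h fineK//; have := X0 _ Sw.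
by case: (X w) => [r||]//= r0; rewrite /mine; case: ifP.
Qed.

Let mg : measurable_fun setT (h \_ S).
Proof.
apply/(measurable_restrictT _ mS); apply: measurableT_comp => //.
by apply: measurable_mine => //; exact: measurable_funS mX.
Qed.

Let G : {RV P >-> R} := mfun_Sub (mem_set mg).

Let GE w : G w = (h \_ S) w. Proof. by []. Qed.

Let G_ge0 w : (0 <= G w)%R.
Proof. by rewrite GE /patch; case: ifPn => // /set_mem Sw; rewrite -lee_fin hE// le_min X0. Qed.

Let ccdf_tail t : (0 <= t < c)%R -> ccdf G t = tail t.
Proof.
move=> /andP[t0 tc]; congr (P _); apply/seteqP; split => w /=.
  rewrite in_itv/= andbT /patch; case: ifPn; last by rewrite ltNge t0.
  by move=> /set_mem Sw; rewrite -lte_fin hE// lt_min => /andP[].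
move=> [tX Sw]; rewrite in_itv/= andbT /patch mem_set// -lte_fin hE//.
by rewrite lt_min tX lte_fin.
Qed.

Let ccdf_ge t : (c <= t)%R -> ccdf G t = 0.
Proof.
move=> ct; rewrite -[RHS](measure0 P); congr (P _); apply/seteqP; split => w //=.
rewrite in_itv/= andbT /patch; case: ifPn; last by rewrite ltNge (le_trans c0 ct).
move=> /set_mem Sw; rewrite -lte_fin hE// lt_min => /andP[_].
by rewrite lte_fin ltNge ct.
Qed.

Lemma measurable_tail_probability : measurable_fun `[0%R, c[ (fun t => tail t).
Proof.
apply: (eq_measurable_fun (ccdf G)); last exact: measurable_funS (ccdf_measurable G).
by move=> t; rewrite inE/= in_itv/= => /ccdf_tail.
Qed.

Lemma integral_tail_probability :
  \int[lebesgue_measure]_(t in `[0%R, c[) tail t = \int[P]_(w in S) mine (X w) c%:E.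
Proof.
have := ge0_expectation_ccdf G_ge0; rewrite expectation_def.
rewrite (@itv_bndbnd_setU _ _ _ (BLeft c)) ?bnd_simp//.
rewrite integral_setU//; last 2 first.
  - exact: measurable_funS (ccdf_measurable G).
  - apply/disj_setPS => t [] /=; rewrite !in_itv/= => /andP[_ tc] /andP[ct _].
    by move: tc; rewrite ltNge ct.
rewrite [X in _ + X]integral0_eq ?adde0; last first.
  by move=> t /=; rewrite in_itv/= andbT => /ccdf_ge.
move=> E; transitivity (\int[lebesgue_measure]_(t in `[0%R, c[) ccdf G t).
  by apply: eq_integral => t; rewrite inE/= in_itv/= => /ccdf_tail.
rewrite -E [RHS]integral_mkcond; apply: eq_integral => w _.
by rewrite GE /patch; case: ifPn => // /set_mem Sw; rewrite hE.
Qed.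

Hypothesis PS0 : 0 < P S.

Let condP_tailE t :
  condP P [set w | t%:E < X w] S = tail t * ((fine (P S))^-1)%:E.
Proof. exact: div_probabilityE. Qed.

Let invPS_ge0 : 0 <= ((fine (P S))^-1)%:E.
Proof. by rewrite lee_fin invr_ge0 fine_ge0. Qed.

Lemma measurable_condP_tail :
  measurable_fun `[0%R, c[ (fun t => condP P [set w | t%:E < X w] S).
Proof.
have := measurable_funeM ((fine (P S))^-1)%:E measurable_tail_probability.
by apply: eq_measurable_fun => t _; rewrite condP_tailE muleC.
Qed.

Lemma integral_condP_tail :
  \int[lebesgue_measure]_(t in `[0%R, c[) condP P [set w | t%:E < X w] S =
  condE P (fun w => mine (X w) c%:E) S.
Proof.
under eq_integral do rewrite condP_tailE.
rewrite ge0_integralZr//; last exact: measurable_tail_probability.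
by rewrite integral_tail_probability /condE div_probabilityE.
Qed.

End tail_integral.

(* e l >= e (f - y + x) = y (a - e) + e x >= x (a - e) + e x = x a *)
Lemma censored_ratio_le (R : realDomainType) (x y e f a l : R) :
  (0 <= e <= a)%R -> (x <= y)%R -> (f <= l - x + y)%R -> (y * a = e * f)%R ->
  (x * a <= e * l)%R.
Proof.
move=> /andP[e0 ea] xy fl yaef.
have : (0 <= e * (l - x + y - f))%R by rewrite mulr_ge0// subr_ge0.
have : (0 <= (a - e) * (y - x))%R by rewrite mulr_ge0// subr_ge0.
nra.
Qed.

Section conditioning.
Context d (Omega : measurableType d) (R : realType) (P : probability Omega R).

Lemma le_condE (S : set Omega) (X Y : Omega -> \bar R) :
  measurable S -> measurable_fun S X -> measurable_fun S Y ->
  (forall w, S w -> 0 <= X w) -> (forall w, S w -> X w <= Y w) ->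
  condE P X S <= condE P Y S.
Proof.
move=> mS mX mY X0 XY; apply: lee_wpmul2r; first by rewrite inve_ge0.
exact: ge0_le_integral.
Qed.

Lemma condP_censored_le (E F A L : set Omega) :
  measurable E -> measurable F -> measurable A -> measurable L ->
  L `<=` A -> E `&` L `<=` F -> (F `&` A) `\` E `<=` L -> 0 < P L ->
  condP P (E `&` F) A = condP P E A * condP P F A ->
  condP P E L <= condP P E A.
Proof.
move=> mE mF mA mL LA ELF FAEL PL0 indep.
have PA0 : 0 < P A by rewrite (lt_le_trans PL0)// le_measure// inE.
have mEF := measurableI _ _ mE mF; have mFA := measurableI _ _ mF mA.
have mEL := measurableI _ _ mE mL; have mEA := measurableI _ _ mE mA.
have mEFA := measurableI _ _ mEF mA.
move: indep; rewrite /condP !div_probabilityE//.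
rewrite -(probability_fineK P mEFA) -(probability_fineK P mEA).
rewrite -(probability_fineK P mFA) -(probability_fineK P mEL) -!EFinM lee_fin.
move=> [indep].
set x := fine (P (E `&` L)); set y := fine (P (E `&` F `&` A)).
set e := fine (P (E `&` A)); set f := fine (P (F `&` A)).
set a := fine (P A); set l := fine (P L).
have a0 : (0 < a)%R by rewrite -lte_fin probability_fineK.
have l0 : (0 < l)%R by rewrite -lte_fin probability_fineK.
have xy : (x <= y)%R.
  apply: fine_probability_le => // w [Ew Lw].
  by split; [split => //; apply: ELF | apply: LA].
have ea : (e <= a)%R by apply: fine_probability_le => // w [].
have e0 : (0 <= e)%R by rewrite fine_ge0.
have fl : (f <= l - x + y)%R.
  rewrite /f /l (fine_probabilityDI P mFA mE) (fine_probabilityDI P mL mE).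
  rewrite (setIC L) -/x addrK lerD//; apply: fine_probability_le => //.
  - exact: measurableD.
  - exact: measurableD.
  - by move=> w [FAw nEw]; split => //; apply: FAEL.
  - exact: measurableI.
  - by move=> w [[Fw Aw] Ew].
rewrite ler_pdivrMr// mulrAC ler_pdivlMr//.
apply: (@censored_ratio_le _ x y e f a l) => //; first by rewrite e0 ea.
by rewrite -[y](divfK (lt0r_neq0 a0)) indep -/e -/f -/a; field; rewrite lt0r_neq0.
Qed.

End conditioning.

Section essential_max.
Context d (Omega : measurableType d) (R : realType) (P : probability Omega R).

Definition ess_max (Y : Omega -> \bar R) : \bar R :=
  ereal_inf (EFin @` [set t : R | P [set w | Y w <= t%:E] = 1]).

Variable Y : Omega -> \bar R.
Hypothesis mY : measurable_fun setT Y.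

Let mY_le (t : R) : measurable [set w | Y w <= t%:E].
Proof. exact: measurable_set_lee. Qed.

Let mY_gt (t : R) : measurable [set w | t%:E < Y w].
Proof. exact: measurable_set_lte. Qed.

Let probability_gt_eq0 (t : R) :
  P [set w | Y w <= t%:E] = 1 -> P [set w | t%:E < Y w] = 0.
Proof.
have -> : [set w | t%:E < Y w] = ~` [set w | Y w <= t%:E].
  by apply/seteqP; split => w /=; rewrite leNgt; case: (_ < _).
by rewrite probability_setC// => ->; rewrite subee.
Qed.

Lemma ess_max_ge0 : 0 < P [set w | 0 <= Y w] -> 0 <= ess_max Y.
Proof.
move=> PY0; apply: le_ereal_inf_tmp => _ [t Yt1 <-]; rewrite lee_fin leNgt.
apply/negP => t0; move: PY0; rewrite lt_neqAle measure_ge0 andbT => /negP; apply.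
have disj : [set w | Y w <= t%:E] `&` [set w | 0 <= Y w] = set0.
  apply/seteqP; split => // w [/= Yt Y0].
  by have := le_trans Y0 Yt; rewrite lee_fin leNgt t0.
have mY0 : measurable [set w | 0 <= Y w] by exact: measurable_set_lee.
have : P [set w | Y w <= t%:E] + P [set w | 0 <= Y w] <= 1.
  by have := probability_le1 P (measurableU _ _ (mY_le t) mY0); rewrite measureU.
rewrite Yt1 -[leRHS]adde0 leeD2lE// => PY0.
by rewrite eq_le PY0 measure_ge0.
Qed.

Lemma probability_gt_ess_max :
  ess_max Y \is a fin_num -> P [set w | ess_max Y < Y w] = 0.
Proof.
move=> Yfin; set b := fine (ess_max Y).
have Yb : ess_max Y = b%:E by rewrite fineK.
pose F n := [set w | (b + n.+1%:R^-1)%:E < Y w].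
have F0 n : P (F n) = 0.
  have n0 : (0 < n.+1%:R^-1 :> R)%R by rewrite invr_gt0.
  have [_ [t Yt1 <-]] := lb_ereal_inf_adherent n0 Yfin.
  rewrite -[ereal_inf _]/(ess_max Y) Yb -EFinD lte_fin => tb.
  apply/eqP; rewrite eq_le measure_ge0 andbT.
  rewrite -(probability_gt_eq0 _ Yt1).
  apply: le_measure; rewrite ?inE; [exact: mY_gt|exact: mY_gt|] => w /=.
  by apply: le_lt_trans; rewrite lee_fin ltW.
rewrite Yb; apply/eqP; rewrite eq_le measure_ge0 andbT.
have : [set w | b%:E < Y w] `<=` \bigcup_n F n.
  move=> w /=; case Yw: (Y w) => [r||]//=.
    by rewrite lte_fin => /ltr_add_invr[k bk]; exists k => //; rewrite /F /= Yw lte_fin.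
  by exists 0%N => //; rewrite /F /= Yw ltey.
move=> /(measure_sigma_subadditive P (fun n => mY_gt _) (mY_gt b)).
by rewrite eseries0// => i _ _; exact: F0.
Qed.

End essential_max.

Section changepoint_delay.
Context d (Omega : measurableType d) (R : realType) (P : probability Omega R).
Variables nu tau T : Omega -> \bar R.
Hypotheses (mnu : measurable_fun setT nu) (mtau : measurable_fun setT tau).
Hypothesis mT : measurable_fun setT T.

Local Notation X := (dtau nu tau).
Local Notation Y := (dT nu T).
Local Notation A := (eventA nu tau).
Local Notation L := (eventLB nu tau T).
Local Notation b := (fine (DeltaTmax P nu T)).

Let mX : measurable_fun setT X. Proof. exact: emeasurable_funB. Qed.
Let mY : measurable_fun setT Y. Proof. exact: emeasurable_funB. Qed.

Let mA : measurable A.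
Proof.
apply: measurableI.
  exact: measurable_set_lte mnu (measurable_cst _).
exact: measurable_set_lee (measurable_cst _) mX.
Qed.

Let mL : measurable L.
Proof.
have -> : L = A `&` [set w | X w <= Y w].
  by apply/seteqP; split => w /=; rewrite /eventLB /eventA /=; tauto.
by apply: measurableI => //; exact: measurable_set_lee.
Qed.

Let LA : L `<=` A. Proof. by move=> w [? []]. Qed.

Let X_ge0 w : A w -> 0 <= X w. Proof. by case. Qed.

Hypothesis PL0 : 0 < P L.
Hypothesis DTfin : DeltaTmax P nu T \is a fin_num.

Let PA0 : 0 < P A. Proof. by rewrite (lt_le_trans PL0)// le_measure// inE. Qed.

Let b_ge0 : (0 <= b)%R.
Proof.
rewrite fine_ge0// ess_max_ge0// (lt_le_trans PL0)// le_measure ?inE//.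
  exact: measurable_set_lee.
by move=> w [_ [X0 XY]]; exact: le_trans XY.
Qed.

Lemma M_KM_condE : M_KM P nu tau T = condE P (fun w => mine (X w) b%:E) A.
Proof.
rewrite /M_KM -integral_itv_bndo_bndc; first exact: integral_condP_tail.
exact: measurable_condP_tail.
Qed.

Lemma M_LB_condE : M_LB P nu tau T = condE P (fun w => mine (X w) b%:E) L.
Proof.
have mXb : measurable_fun setT (fun w => mine (X w) b%:E).
  exact: measurable_mine.
rewrite /M_LB /condE; congr (_ / _); apply: ge0_ae_eq_integral => //.
- exact: measurable_funS mX.
- exact: measurable_funS mXb.
- by move=> w /LA /X_ge0.
- by move=> w /LA /X_ge0 X0; rewrite le_min X0 lee_fin.
exists [set w | b%:E < Y w]; split.
- exact: measurable_set_lte.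
- by rewrite fineK//; exact: probability_gt_ess_max.
move=> w /= XbX; rewrite ltNge; apply/negP => Yb; apply: XbX => -[_ [_ XY]].
by rewrite min_l// (le_trans XY Yb).
Qed.

Lemma M_KM_le_Minf : M_KM P nu tau T <= Minf P nu tau.
Proof.
rewrite M_KM_condE; apply: le_condE => //.
- by apply: measurable_funS (measurable_mine mX (measurable_cst _)).
- exact: measurable_funS mX.
- by move=> w /X_ge0 X0; rewrite le_min X0 lee_fin.
- by move=> w _; rewrite ge_min lexx.
Qed.

Hypothesis indep : cond_indep P X Y A.

Lemma M_LB_le_M_KM : M_LB P nu tau T <= M_KM P nu tau T.
Proof.
rewrite M_LB_condE M_KM_condE -!integral_condP_tail//; last by move=> w /LA /X_ge0.
apply: ge0_le_integral => //.
- by move=> t _; rewrite /condP div_probabilityE// mule_ge0// lee_fin invr_ge0 fine_ge0.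
- by apply: measurable_condP_tail => // w /LA /X_ge0.
- exact: measurable_condP_tail.
move=> t _; have mtX := measurable_set_lte (measurable_cst t%:E) mX.
have mtY := measurable_set_lte (measurable_cst t%:E) mY.
apply: (@condP_censored_le _ _ _ P _ [set w | t%:E < Y w]) => //.
- by move=> w [/= tX [_ [_ XY]]]; exact: lt_le_trans XY.
- move=> w [[/= tY Aw] /negP]; rewrite -leNgt => Xt; split; first by case: Aw.
  by split; [case: Aw|exact: le_trans Xt (ltW tY)].
have mU : measurable [set x : \bar R | t%:E < x].
  by apply: measurable_set_lte; [exact: measurable_cst|exact: measurable_id].
by have := indep _ _ mU mU.
Qed.

End changepoint_delay.

Theorem theorem4p4 (d : measure_display) (Omega : measurableType d) (R : realType)
  (P : probability Omega R) (nu tau T : Omega -> \bar R) :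
  measurable_fun setT nu -> measurable_fun setT tau -> measurable_fun setT T ->
  (forall w, nu w = +oo \/ exists n : nat, nu w = (n%:R)%:E) ->
  (forall w, tau w = +oo \/ exists n : nat, tau w = (n%:R)%:E) ->
  (forall w, exists n : nat, T w = (n%:R)%:E) ->
  cond_indep P (dtau nu tau) (dT nu T) (eventA nu tau) ->
  0 < P (eventLB nu tau T) ->
  Minf P nu tau < +oo ->
  DeltaTmax P nu T \is a fin_num ->
  bias_LB P nu tau T <= bias_KM P nu tau T /\ bias_KM P nu tau T <= 0.
Proof.
move=> mnu mtau mT _ _ _ indep PL0 _ DTfin.
split; first by apply: leeB => //; exact: M_LB_le_M_KM.
by rewrite /bias_KM sube_le0; exact: M_KM_le_Minf.
Qed.
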